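(* Assume $L_1\subseteq\bigcup_{\alpha\in\Sigma^\kappa}\Sigma^*\alpha\Sigma^*\bar\alpha$ and $L_2\subseteq\bigcup_{\alpha\in\Sigma^\kappa}\alpha\Sigma^*\bar\alpha\Sigma^*$. Let $M=\mathcal{I}\times\mathcal{F}$ where $\mathcal{I},\mathcal{F}$ are the initial and final states of $\mathcal{A}$; for $\mu=(I,F)\in M$ with $F=((d_1,d_2),e_1,e_2,\kappa)$ let $R_\mu$ be the set of labels of paths in $\mathcal{A}$ from $I$ to $F$ and $B_\mu=B(d_1,d_2,e_1,e_2)$. Let $\sigma=\max_{\mu\in M}\lambda_{B_\mu}$, $\rho=\max_{\mu\in M}\lambda_{R_\mu}$, and $\eta=\lambda_{\mathcal{H}_\kappa(L_1,L_2)}$. Then $\eta=\max\{\sigma,\sqrt\rho\}$.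
   Context: $\Sigma$ is a finite alphabet with at least two letters with an involution $a\mapsto\bar a$ ($\bar{\bar a}=a$), extended to words by $\overline{a_1\cdots a_m}=\bar a_m\cdots\bar a_1$ and to languages elementwise. $\kappa$ is a fixed positive integer. $\mathcal{H}_\kappa(L_1,L_2)=\{\gamma\alpha\beta\bar\alpha\bar\gamma:|\alpha|\ge\kappa,\ \gamma\alpha\beta\bar\alpha\in L_1\text{ or }\alpha\beta\bar\alpha\bar\gamma\in L_2\}$. $L_1,L_2$ are regular; $\mathcal{A}_1=(Q_1,\Sigma,E_1,\{q_{01}\},F_1)$ is a complete DFA accepting $L_1$, $\mathcal{A}_2=(Q_2,\Sigma,E_2,\{q_{02}\},F_2)$ a complete DFA accepting $\overline{L_2}$; $p\cdot w$ is the state reached from $p$ on $w$. Growth indicator: $\lambda_L=\inf\{\lambda\ge0:\exists c>0\ \forall m: |L\cap\Sigma^m|\le c\lambda^m\}$. Construction of $\mathcal{A}$: $Q_{12}=\{(q_{01}\cdot w,q_{02}\cdot w):w\in\Sigma^*\}$ with $(p_1,p_2)\cdot w=(p_1\cdot w,p_2\cdot w)$. For $(p_1,p_2,q_1,q_2)\in Q_1\times Q_2\times Q_1\times Q_2$ let $B(p_1,p_2,q_1,q_2)=\{w:p_1\cdot w=q_1,\ p_2\cdot\bar w=q_2\}$; the quadruple is a basic bridge if this set is nonempty. States of $\mathcal{A}$ are all $((p_1,p_2),q_1,q_2,\ell)$ with $(p_1,p_2)\in Q_{12}$, $q_i\in Q_i$, $\ell\in\{0,\dots,\kappa\}$, $(p_1,p_2,q_1,q_2)$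 a basic bridge. For $a\in\Sigma$, $P\in Q_{12}$, $q_i\in Q_i$, there is an $a$-arc from $(P,q_1\cdot\bar a,q_2\cdot\bar a,\ell)$ to $(P\cdot a,q_1,q_2,\ell')$, provided both are states, exactly when: $\ell=\ell'=0$ and $q_1\cdot\bar a\notin F_1$, $q_2\cdot\bar a\notin F_2$; or $\ell=0,\ell'=1$ and ($q_1\cdot\bar a\in F_1$ or $q_2\cdot\bar a\in F_2$); or $1\le\ell<\kappa$ and $\ell'=\ell+1$. Initial states: $((q_{01},q_{02}),q_1',q_2',0)$; final states: those with $\ell=\kappa$. $\mathcal{A}$ is trimmed: states not reachable from an initial state, or from which no final state is reachable, are removed. *)

From HB Require Import structures.
From mathcomp Require Import all_boot all_order all_algebra.
From mathcomp Require Import boolp classical_sets reals.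
Set Implicit Arguments. Unset Strict Implicit. Unset Printing Implicit Defensive.
Import Order.TTheory GRing.Theory Num.Theory.
Local Open Scope ring_scope.

Section Words.
Variable S : finType.
Variable bar : S -> S.

Definition wbar (w : seq S) : seq S := rev (map bar w).

Definition ncount (L : set (seq S)) (m : nat) : nat :=
  #|[set t : m.-tuple S | `[< L (tval t) >]]|.

Definition growth (R : realType) (L : set (seq S)) : R :=
  inf [set l : R | 0 <= l /\
        exists c : R, 0 < c /\ forall m : nat, (ncount L m)%:R <= c * l ^+ m].

Definition Hk (kappa : nat) (L1 L2 : set (seq S)) : set (seq S) :=
  [set w | exists gamma alpha beta : seq S,
     w = gamma ++ alpha ++ beta ++ wbar alpha ++ wbar gamma /\
     (kappa <= size alpha)%N /\
     (L1 (gamma ++ alpha ++ beta ++ wbar alpha) \/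
      L2 (alpha ++ beta ++ wbar alpha ++ wbar gamma))].
End Words.

Definition dstar (S Q : Type) (d : Q -> S -> Q) (p : Q) (w : seq S) : Q :=
  foldl d p w.

Section Construction.
Variables (S : finType) (bar : S -> S).
Variables (Q1 Q2 : finType) (d1 : Q1 -> S -> Q1) (d2 : Q2 -> S -> Q2).
Variables (q01 : Q1) (q02 : Q2) (F1 : {set Q1}) (F2 : {set Q2}).
Variable kappa : nat.

Definition St : finType := ((Q1 * Q2) * Q1 * Q2 * 'I_kappa.+1)%type.
Definition stP (x : St) : Q1 * Q2 := x.1.1.1.
Definition stq1 (x : St) : Q1 := x.1.1.2.
Definition stq2 (x : St) : Q2 := x.1.2.
Definition stl (x : St) : nat := x.2.

Definition inQ12 (P : Q1 * Q2) : Prop :=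
  exists w : seq S, P = (dstar d1 q01 w, dstar d2 q02 w).

Definition Bset (p1 : Q1) (p2 : Q2) (q1 : Q1) (q2 : Q2) : set (seq S) :=
  [set w | dstar d1 p1 w = q1 /\ dstar d2 p2 (wbar bar w) = q2].

Definition basic_bridge p1 p2 q1 q2 : Prop := exists w, Bset p1 p2 q1 q2 w.

Definition isState (x : St) : Prop :=
  inQ12 (stP x) /\ basic_bridge (stP x).1 (stP x).2 (stq1 x) (stq2 x).

Definition arc (x : St) (a : S) (y : St) : Prop :=
  isState x /\ isState y /\
  stP y = (d1 (stP x).1 a, d2 (stP x).2 a) /\
  stq1 x = d1 (stq1 y) (bar a) /\ stq2 x = d2 (stq2 y) (bar a) /\
  [\/ [/\ stl x = 0%N, stl y = 0%N, stq1 x \notin F1 & stq2 x \notin F2],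
      [/\ stl x = 0%N, stl y = 1%N & (stq1 x \in F1) || (stq2 x \in F2)]
    | [/\ (1 <= stl x)%N, (stl x < kappa)%N & stl y = (stl x).+1]].

Definition initialS (x : St) : Prop :=
  isState x /\ stP x = (q01, q02) /\ stl x = 0%N.

Definition finalS (x : St) : Prop := isState x /\ stl x = kappa.

Fixpoint run (ar : St -> S -> St -> Prop) (x : St) (w : seq S) (y : St)
  : Prop :=
  match w with
  | [::] => x = y
  | a :: w' => exists z, ar x a z /\ run ar z w' y
  end.

Definition accessible (x : St) : Prop :=
  exists i w, initialS i /\ run arc i w x.
Definition coaccessible (x : St) : Prop :=
  exists f w, finalS f /\ run arc x w f.
Definition useful (x : St) : Prop := accessible x /\ coaccessible x.

Definition arcA (x : St) (a : S) (y : St) : Prop :=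
  useful x /\ useful y /\ arc x a y.
Definition initialA (x : St) : Prop := useful x /\ initialS x.
Definition finalA (x : St) : Prop := useful x /\ finalS x.

Definition inM (mu : St * St) : Prop := initialA mu.1 /\ finalA mu.2.

Definition Rmu (mu : St * St) : set (seq S) :=
  [set w | run arcA mu.1 w mu.2].

Definition Bmu (mu : St * St) : set (seq S) :=
  Bset (stP mu.2).1 (stP mu.2).2 (stq1 mu.2) (stq2 mu.2).

(* max over M (0 if M is empty; all growth indicators are >= 0) *)
Definition maxM (R : realType) (f : St * St -> R) : R :=
  \big[Num.max/0]_(mu : St * St | `[< inM mu >]) f mu.

End Construction.

Arguments wbar : clear implicits.
Arguments growth : clear implicits.
Arguments Hk : clear implicits.
Arguments Bmu : clear implicits.
Arguments Rmu : clear implicits.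
Arguments maxM : clear implicits.

(* The automaton reads the outer arm [w] of a hairpin [w b wbar w]: it stays at level 0
   up to the first position where the hairpin witnesses membership in [Hk], then reads
   exactly kappa more letters; the rest of the hairpin is a word [b] of the bridge language
   of the final state.  Hence [Hk] is the finite union over [mu] of the hairpins built from
   [R_mu] and [B_mu], and counting hairpins of length [N = 2n + k] gives
     |R_mu ∩ Σ^n| |B_mu ∩ Σ^k| <= |Hk ∩ Σ^(2n+k)|
                               <= Σ_mu Σ_(2n+k=N) |R_mu ∩ Σ^n| |B_mu ∩ Σ^k|.
   Fixing a word in one factor, the left inequality bounds [lambda_B] and [sqrt lambda_R]
   by [eta] (when [R_mu] is empty, another [mu] with the same final state is used).  The
   right one gives [|Hk ∩ Σ^N| = O(N s^N)] for every [s > max(sigma, sqrt rho)]. *)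

From Pilot Require Import Defs.
From HB Require Import structures.
From mathcomp Require Import all_boot all_order all_algebra.
From mathcomp Require Import boolp classical_sets reals.
From mathcomp Require Import zify lra.
Import Order.TTheory GRing.Theory Num.Theory.

Set Implicit Arguments. Unset Strict Implicit. Unset Printing Implicit Defensive.
Local Open Scope ring_scope.
Local Open Scope classical_set_scope.

Section LinearVsExponential.
Variable R : realFieldType.
Implicit Types s t x : R.

Lemma bernoulli_ineq x n : 0 <= x -> 1 + n%:R * x <= (1 + x) ^+ n.
Proof.
move=> x0; elim: n => [|n IH]; first by rewrite mul0r addr0 expr0.
rewrite exprS -natr1; have n0 : 0 <= (n%:R : R) := ler0n _ _.
have IHx : (1 + x) * (1 + n%:R * x) <= (1 + x) * (1 + x) ^+ n.
  by rewrite ler_wpM2l // addr_ge0.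
have nxx : 0 <= n%:R * (x * x) by rewrite !mulr_ge0.
nra.
Qed.

Lemma linear_mul_exp_le s t : 0 < s -> s < t ->
  exists2 E, 0 < E & forall N : nat, N.+1%:R * s ^+ N <= E * t ^+ N.
Proof.
move=> s0 st; pose e := t / s - 1.
have e0 : 0 < e by rewrite subr_gt0 ltr_pdivlMr // mul1r.
pose f := Num.min 1 e.
have f0 : 0 < f by rewrite lt_min ltr01 e0.
exists f^-1; first by rewrite invr_gt0.
move=> N; rewrite ler_pdivlMl // mulrA.
have -> : t = (1 + e) * s by rewrite addrC subrK divfK ?gt_eqF.
rewrite exprMn ler_wpM2r ?exprn_ge0 ?(ltW s0) //.
apply: le_trans (bernoulli_ineq N (ltW e0)); rewrite mulrC.
have n0 : 0 <= (N%:R : R) := ler0n _ _.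
have : N%:R * f <= N%:R * e by rewrite ler_wpM2l // ge_min lexx orbT.
have : f <= 1 by rewrite ge_min lexx.
rewrite -natr1; lra.
Qed.

End LinearVsExponential.

Lemma sqrtr_le_sqr (R : rcfType) (x y : R) :
  0 <= y -> (Num.sqrt x <= y) = (x <= y ^+ 2).
Proof. by move=> y0; rewrite -ler_sqrt ?exprn_ge0 // sqrtr_sqr ger0_norm. Qed.

Section Growth.
Variables (R : realType) (S : finType).
Implicit Types (L H : set (seq S)) (c l s t : R).

Let bounds L : set R := [set l | 0 <= l /\
  exists c, 0 < c /\ forall m, (ncount L m)%:R <= c * l ^+ m].

Lemma ncount_le_exp L m : (ncount L m <= #|S| ^ m)%N.
Proof. by rewrite /ncount -card_tuple; exact: max_card. Qed.

Lemma ncount_subset L H m : L `<=` H -> (ncount L m <= ncount H m)%N.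
Proof.
move=> LH; apply/subset_leq_card/fintype.subsetP => w /=.
by rewrite !inE; exact: LH.
Qed.

Let bounds_neq0 L : bounds L !=set0.
Proof.
exists #|S|%:R; split=> //; exists 1; split=> // m.
by rewrite mul1r -natrX ler_nat ncount_le_exp.
Qed.

Let bounds_ge0 L : lbound (bounds L) 0.
Proof. by move=> l []. Qed.

Lemma growth_ge0 L : 0 <= growth S R L.
Proof. exact: lb_le_inf (bounds_neq0 L) (@bounds_ge0 L). Qed.

Lemma growth_le L l c : 0 <= l -> 0 <= c ->
  (forall m, (ncount L m)%:R <= c * l ^+ m) -> growth S R L <= l.
Proof.
move=> l0 c0 Lc; apply: (ge_inf (E := bounds L)); first by exists 0.
split=> //; exists (c + 1); split=> [|m]; first by rewrite ltr_wpDl.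
by apply: le_trans (Lc m) _; rewrite ler_wpM2r ?exprn_ge0 // lerDl.
Qed.

Lemma growth_lt_bound L t : growth S R L < t ->
  exists2 c, 0 < c & forall m, (ncount L m)%:R <= c * t ^+ m.
Proof.
move=> /(inf_lt (bounds_neq0 L)) [l [l0 [c [c0 Lc]]] lt].
exists c => // m; apply: le_trans (Lc m) _; rewrite ler_pM2l //.
apply: lerXn2r; rewrite ?nnegrE //; [exact: le_trans l0 (ltW lt) | exact: ltW].
Qed.

Lemma growth_lt_uniform (I : finType) (P : set I) (L_ : I -> set (seq S)) t :
  (forall i, P i -> growth S R (L_ i) < t) ->
  exists2 c, 0 < c & forall i, P i -> forall m, (ncount (L_ i) m)%:R <= c * t ^+ m.
Proof.
move=> Lt.
have /choice [c_ Hc] : forall i, exists c, 0 < c /\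
    (P i -> forall m, (ncount (L_ i) m)%:R <= c * t ^+ m).
  move=> i; have [Pi|] := pselect (P i); last by exists 1.
  by have [c c0 Lc] := growth_lt_bound (Lt i Pi); exists c.
have c_ge0 i : 0 <= c_ i by have [/ltW] := Hc i.
have t0 i : P i -> 0 <= t.
  by move=> Pi; apply: le_trans (ltW (Lt i Pi)); exact: growth_ge0.
exists (1 + \sum_i c_ i) => [|i Pi m]; first by rewrite ltr_wpDr // sumr_ge0.
apply: le_trans (proj2 (Hc i) Pi m) _; rewrite ler_wpM2r ?exprn_ge0 ?(t0 i Pi) //.
by apply: ler_wpDl => //; rewrite (bigD1 i) //= lerDl sumr_ge0.
Qed.

Lemma growth_le_linear_exp L c s : 0 <= c -> 0 < s ->
  (forall N, (ncount L N)%:R <= c * (N.+1%:R * s ^+ N)) -> growth S R L <= s.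
Proof.
move=> c0 s0 Lc; apply/ler_addgt0Pr => e e0.
have [E E0 HE] : exists2 E, 0 < E & forall N : nat, N.+1%:R * s ^+ N <= E * (s + e) ^+ N.
  by apply: linear_mul_exp_le; rewrite // ltrDl.
apply: (growth_le (c := c * E)) => [||N].
- by rewrite addr_ge0 // ltW.
- by rewrite mulr_ge0 // ltW.
- by rewrite -mulrA; apply: le_trans (Lc N) _; rewrite ler_wpM2l.
Qed.

Lemma growth_le_pow_shift L H p k t :
  (forall m, ncount L m <= ncount H (p * m + k))%N ->
  growth S R H < t -> growth S R L <= t ^+ p.
Proof.
move=> LH /[dup] Ht /growth_lt_bound [c c0 Hc].
have t0 : 0 <= t by apply: le_trans (ltW Ht); exact: growth_ge0.
apply: (growth_le (c := c * t ^+ k)) => [||m]; first exact: exprn_ge0.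
  by rewrite mulr_ge0 ?exprn_ge0 // ltW.
rewrite -exprM -mulrA -exprD addnC; apply: le_trans (Hc _).
by rewrite ler_nat LH.
Qed.

Lemma growth_le_shift L H k :
  (forall m, ncount L m <= ncount H (m + k))%N -> growth S R L <= growth S R H.
Proof.
move=> LH; apply/ler_addgt0Pr => e e0.
rewrite -[_ + e]expr1; apply: (growth_le_pow_shift (H := H) (k := k)).
  by move=> m; rewrite mul1n LH.
by rewrite ltrDl.
Qed.

Lemma growth_subset L H : L `<=` H -> growth S R L <= growth S R H.
Proof.
by move=> LH; apply: (growth_le_shift (k := 0)) => m; rewrite addn0 ncount_subset.
Qed.

Lemma growth_le_sqr_shift L H k :
  (forall m, ncount L m <= ncount H (m.*2 + k))%N ->
  growth S R L <= growth S R H ^+ 2.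
Proof.
move=> LH; rewrite -sqrtr_le_sqr ?growth_ge0 //; apply/ler_addgt0Pr => e e0.
rewrite sqrtr_le_sqr; last by rewrite addr_ge0 ?growth_ge0 // ltW.
apply: (growth_le_pow_shift (H := H) (k := k)); last by rewrite ltrDl.
by move=> m; rewrite mul2n LH.
Qed.

End Growth.

Section Hairpins.
Variables (S : finType) (bar : S -> S).
Local Notation wb := (wbar S bar).
Implicit Types (u v w b : seq S) (L Lw Lb : set (seq S)).

Lemma wbar_cat u v : wb (u ++ v) = wb v ++ wb u.
Proof. by rewrite /wbar map_cat rev_cat. Qed.

Lemma size_wbar w : size (wb w) = size w.
Proof. by rewrite /wbar size_rev size_map. Qed.

Lemma wbarK : involutive bar -> involutive wb.
Proof. by move=> barK w; rewrite /wbar map_rev revK -map_comp map_id_in // => x _ /=. Qed.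

Definition hairpin w b := w ++ b ++ wb w.

Definition hairpins Lw Lb : set (seq S) := [set hairpin w b | w in Lw & b in Lb].

Lemma hairpin_cat u v b : hairpin (u ++ v) b = hairpin u (hairpin v b).
Proof. by rewrite /hairpin wbar_cat !catA. Qed.

Lemma hairpin_cons c w b : hairpin (c :: w) b = c :: hairpin w b ++ [:: bar c].
Proof. by rewrite -cat1s hairpin_cat /hairpin /wbar /= !catA. Qed.

Lemma wbar_hairpin : involutive bar -> forall w b, wb (hairpin w b) = hairpin w (wb b).
Proof. by move=> barK w b; rewrite /hairpin !wbar_cat wbarK // catA. Qed.

Lemma size_hairpin w b : size (hairpin w b) = ((size w).*2 + size b)%N.
Proof. by rewrite /hairpin !size_cat size_wbar -addnn; lia. Qed.

Lemma hairpin_inj w1 b1 w2 b2 : size w1 = size w2 ->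
  hairpin w1 b1 = hairpin w2 b2 -> w1 = w2 /\ b1 = b2.
Proof.
move=> sw e; have sb : size b1 = size b2.
  by move: (congr1 size e); rewrite !size_hairpin sw => /addnI.
move/eqP: e; rewrite eqseq_cat // eqseq_cat //.
by case/andP=> /eqP-> /andP[/eqP-> _].
Qed.

Definition words L m : seq (seq S) :=
  [seq tval t | t <- enum [set t : m.-tuple S | `[< L (tval t) >]]%SET].

Lemma size_words L m : size (words L m) = ncount L m.
Proof. by rewrite size_map /ncount cardE. Qed.

Lemma words_uniq L m : uniq (words L m).
Proof. by rewrite map_inj_uniq ?enum_uniq //; exact: val_inj. Qed.

Lemma mem_words L m w : w \in words L m <-> size w = m /\ L w.
Proof.
split=> [/mapP[t]|[sw Lw]].
  by rewrite mem_enum inE => /asboolP Lt ->; rewrite size_tuple.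
have sw' : size w == m by apply/eqP.
by apply/mapP; exists (Tuple sw'); rewrite // mem_enum inE; apply/asboolP.
Qed.

Lemma ncount_gt0 L w : L w -> (0 < ncount L (size w))%N.
Proof.
move=> Lw; have : w \in words L (size w) by apply/mem_words.
by rewrite -size_words; case: (words L (size w)).
Qed.

Lemma ncount_hairpins_ge Lw Lb n k :
  (ncount Lw n * ncount Lb k <= ncount (hairpins Lw Lb) (n.*2 + k))%N.
Proof.
rewrite -!size_words -(size_allpairs hairpin); apply: uniq_leq_size.
  apply: allpairs_uniq; try exact: words_uniq.
  move=> [w1 b1] [w2 b2] /allpairsP[[x1 y1] /= [/mem_words[s1 _] _ [-> ->]]].
  move=> /allpairsP[[x2 y2] /= [/mem_words[s2 _] _ [-> ->]]] /=.
  by case/hairpin_inj=> [|-> ->]; rewrite ?s1 ?s2.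
move=> h /allpairsP[[w b] /= [/mem_words[sw inw] /mem_words[sb inb] ->]].
by apply/mem_words; split; [rewrite size_hairpin sw sb | exists w => //; exists b].
Qed.

Lemma ncount_bigcup_hairpins_le (I : finType) (P : set I)
    (Lw_ Lb_ : I -> set (seq S)) N :
  (ncount (\bigcup_(i in P) hairpins (Lw_ i) (Lb_ i)) N <=
   \sum_(i | `[< P i >]) \sum_(0 <= n < N.+1 | n.*2 <= N)
     ncount (Lw_ i) n * ncount (Lb_ i) (N - n.*2))%N.
Proof.
pose idx := [seq (i, n) | i <- enum (fun i => `[< P i >]),
                          n <- [seq n <- iota 0 N.+1 | (n.*2 <= N)%N]].
pose F (p : I * nat) :=
  [seq hairpin w b | w <- words (Lw_ p.1) p.2, b <- words (Lb_ p.1) (N - p.2.*2)].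
rewrite -size_words.
apply: (leq_trans (uniq_leq_size (s2 := flatten (map F idx)) (words_uniq _ _) _)).
  move=> h /mem_words[sh [i Pi [w Lw [b Lb eh]]]].
  have sz : size h = ((size w).*2 + size b)%N by rewrite -eh size_hairpin.
  apply/flattenP; exists (F (i, size w)).
    apply: map_f; apply/allpairsP; exists (i, size w); split=> //.
      by rewrite mem_enum; apply/asboolP.
    by rewrite mem_filter mem_iota /= -sh sz -mul2n; apply/andP; split; lia.
  rewrite -eh; apply/allpairsP; exists (w, b); split=> //=.
    by apply/mem_words.
  by apply/mem_words; split=> //; rewrite -sh sz -mul2n; lia.
rewrite size_flatten /shape -map_comp sumnE big_map big_allpairs big_enum.
apply/eq_leq/eq_bigr => i _; rewrite big_filter.
by apply: eq_bigr => n _; rewrite /= size_allpairs !size_words.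
Qed.

End Hairpins.

Section HairpinGrowth.
Variables (R : realType) (S : finType) (bar : S -> S).
Local Notation hairpins := (hairpins bar).
Implicit Types (H Lw Lb : set (seq S)).

Lemma growth_hairpins_ge_right Lw Lb H : Lw !=set0 -> hairpins Lw Lb `<=` H ->
  growth S R Lb <= growth S R H.
Proof.
move=> [w Lw_w] LbH; apply: (@growth_le_shift R _ _ _ (size w).*2) => k.
apply: leq_trans (ncount_subset _ LbH); rewrite addnC.
by apply: leq_trans (ncount_hairpins_ge _ _ _ _ _); rewrite leq_pmull ?ncount_gt0.
Qed.

Lemma growth_hairpins_ge_left Lw Lb H : Lb !=set0 -> hairpins Lw Lb `<=` H ->
  growth S R Lw <= growth S R H ^+ 2.
Proof.
move=> [b Lb_b] LbH; apply: (@growth_le_sqr_shift R _ _ _ (size b)) => n.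
apply: leq_trans (ncount_subset _ LbH).
by apply: leq_trans (ncount_hairpins_ge _ _ _ _ _); rewrite leq_pmulr ?ncount_gt0.
Qed.

Lemma sum_hairpin_counts_le Lw Lb (cw cb s : R) N : 0 <= cw -> 0 <= cb -> 0 <= s ->
  (forall n, (ncount Lw n)%:R <= cw * (s ^+ 2) ^+ n) ->
  (forall k, (ncount Lb k)%:R <= cb * s ^+ k) ->
  (\sum_(0 <= n < N.+1 | n.*2 <= N) ncount Lw n * ncount Lb (N - n.*2))%N%:R
    <= cw * cb * (N.+1%:R * s ^+ N).
Proof.
move=> cw0 cb0 s0 Hw Hb; rewrite natr_sum big_mkcond /=.
apply: le_trans (_ : _ <= \sum_(0 <= n < N.+1) cw * cb * s ^+ N) _; last first.
  by rewrite sumr_const_nat subn0 -[leLHS]mulr_natl [leLHS]mulrCA.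
apply: ler_sum => n _; case: ifP => [le2n|_]; last by rewrite !mulr_ge0 ?exprn_ge0.
rewrite natrM; apply: le_trans (ler_pM (ler0n _ _) (ler0n _ _) (Hw n) (Hb _)) _.
by rewrite -exprM mulrACA -exprD mul2n subnKC.
Qed.

Lemma growth_bigcup_hairpins_le (I : finType) (P : set I)
    (Lw_ Lb_ : I -> set (seq S)) :
  growth S R (\bigcup_(i in P) hairpins (Lw_ i) (Lb_ i)) <=
  Num.max (\big[Num.max/0]_(i | `[< P i >]) growth S R (Lb_ i))
          (Num.sqrt (\big[Num.max/0]_(i | `[< P i >]) growth S R (Lw_ i))).
Proof.
set gw := \big[_/_]_(i | _) growth S R (Lw_ i); set m := Num.max _ _.
apply/ler_addgt0Pr => e e0; set s := m + e.
have m0 : 0 <= m by rewrite le_max sqrtr_ge0 orbT.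
have ms : m < s by rewrite ltrDl.
have s0 : 0 < s by apply: le_lt_trans ms.
have [cb cb0 Hb] : exists2 c, 0 < c &
    forall i, P i -> forall k, (ncount (Lb_ i) k)%:R <= c * s ^+ k.
  apply: growth_lt_uniform => i /asboolP Pi; apply: le_lt_trans ms.
  by rewrite le_max (le_bigmax_cond _ _ Pi).
have gw_lt : gw < s ^+ 2.
  rewrite -ltr_sqrt ?exprn_gt0 // sqrtr_sqr gtr0_norm //.
  by apply: le_lt_trans ms; rewrite le_max lexx orbT.
have [cw cw0 Hw] : exists2 c, 0 < c &
    forall i, P i -> forall n, (ncount (Lw_ i) n)%:R <= c * (s ^+ 2) ^+ n.
  apply: growth_lt_uniform => i /asboolP Pi; apply: le_lt_trans gw_lt.
  exact: le_bigmax_cond _ _ Pi.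
apply: (growth_le_linear_exp (c := #|[pred i | `[< P i >]]|%:R * (cw * cb))) => [||N].
- by rewrite !mulr_ge0 ?ler0n ?(ltW cw0) ?(ltW cb0).
- exact: s0.
apply: le_trans (_ : _ <= \sum_(i | `[< P i >]) cw * cb * (N.+1%:R * s ^+ N)) _.
  have := ncount_bigcup_hairpins_le bar P Lw_ Lb_ N.
  rewrite -(ler_nat R) natr_sum => /le_trans; apply.
  apply: ler_sum => i /asboolP Pi.
  exact: sum_hairpin_counts_le (ltW cw0) (ltW cb0) (ltW s0) (Hw i Pi) (Hb i Pi).
by rewrite sumr_const -[leLHS]mulr_natl mulrA.
Qed.

End HairpinGrowth.

Lemma dstar_cat (S Q : Type) (d : Q -> S -> Q) p u v :
  dstar d p (u ++ v) = dstar d (dstar d p u) v.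
Proof. exact: foldl_cat. Qed.

Section Automaton.
Variables (S : finType) (bar : S -> S) (Q1 Q2 : finType).
Variables (d1 : Q1 -> S -> Q1) (d2 : Q2 -> S -> Q2) (q01 : Q1) (q02 : Q2).
Variables (F1 : {set Q1}) (F2 : {set Q2}) (kappa : nat).

Local Notation St := (St Q1 Q2 kappa).
Local Notation wb := (wbar S bar).
Local Notation hairpin := (hairpin bar).
Local Notation run := (@run S Q1 Q2 kappa).
Local Notation arc := (@Defs.arc S bar Q1 Q2 d1 d2 q01 q02 F1 F2 kappa).
Local Notation arcA := (@arcA S bar Q1 Q2 d1 d2 q01 q02 F1 F2 kappa).
Local Notation isState := (@isState S bar Q1 Q2 d1 d2 q01 q02 kappa).
Local Notation initialS := (@initialS S bar Q1 Q2 d1 d2 q01 q02 kappa).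
Local Notation finalS := (@finalS S bar Q1 Q2 d1 d2 q01 q02 kappa).
Local Notation accessible := (@accessible S bar Q1 Q2 d1 d2 q01 q02 F1 F2 kappa).
Local Notation coaccessible := (@coaccessible S bar Q1 Q2 d1 d2 q01 q02 F1 F2 kappa).
Hypothesis kappa_gt0 : (0 < kappa)%N.
Implicit Types (x y z : St) (u v w : seq S) (ar : St -> S -> St -> Prop).

Lemma run_cat ar x y u v :
  run ar x (u ++ v) y <-> exists2 z, run ar x u z & run ar z v y.
Proof.
elim: u x => [|a u IH] x /=; first by split=> [|[z -> //]]; exists x.
split=> [[z [xz /IH[z' zz' z'y]]]|[z' [z [xz zz']] z'y]].
  by exists z' => //; exists z.
by exists z; split=> //; apply/IH; exists z'.
Qed.

Lemma run_sub ar1 ar2 x w y : (forall x a y, ar1 x a y -> ar2 x a y) ->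
  run ar1 x w y -> run ar2 x w y.
Proof.
move=> ar12; elim: w x => [|a w IH] x //= [z [xz zy]].
by exists z; split; [exact: ar12 | exact: IH].
Qed.

Lemma arcA_arc x a y : arcA x a y -> arc x a y.
Proof. by case=> _ []. Qed.

Lemma run_nth ar (X : nat -> St) (a0 : S) u :
  (forall i, (i < size u)%N -> ar (X i) (nth a0 u i) (X i.+1)) ->
  run ar (X 0%N) u (X (size u)).
Proof.
elim: u X => [|a u IH] X arX //=; exists (X 1%N); split; first exact: arX 0%N _.
by apply: (IH (fun i => X i.+1)) => i ltiu; apply: arX i.+1 _.
Qed.

Lemma accessible_arc x a y : accessible x -> arc x a y -> accessible y.
Proof.
move=> [i [w [Ii ix]]] xy; exists i, (w ++ [:: a]); split=> //.
by apply/run_cat; exists x => //=; exists y.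
Qed.

Lemma coaccessible_run x w y : coaccessible y -> run arc x w y -> coaccessible x.
Proof.
move=> [f [v [Ff yf]]] xy; exists f, (w ++ v); split=> //.
by apply/run_cat; exists y.
Qed.

Lemma run_arcA x w y :
  accessible x -> coaccessible y -> run arc x w y -> run arcA x w y.
Proof.
elim: w x => [|a w IH] x //= Ax Cy [z [xz zy]].
have Az := accessible_arc Ax xz.
have Cz := coaccessible_run Cy zy.
have Cx : coaccessible x by apply: (@coaccessible_run _ (a :: w) _ Cy); exists z.
by exists z; split; [split; [split | split; [split|]] | exact: IH].
Qed.

Lemma run_stP x w y : run arc x w y ->
  stP y = (dstar d1 (stP x).1 w, dstar d2 (stP x).2 w).
Proof.
elim: w x => [|a w IH] x /=; first by move=> ->; case: (stP y).
by move=> [z [[_ [_ [Pz _]]] /IH ->]]; rewrite Pz.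
Qed.

Lemma run_stq x w y : run arc x w y ->
  stq1 x = dstar d1 (stq1 y) (wb w) /\ stq2 x = dstar d2 (stq2 y) (wb w).
Proof.
elim: w x => [|a w IH] x /=; first by move=> ->.
move=> [z [[_ [_ [_ [-> [-> _]]]]] /IH[-> ->]]].
by rewrite -cat1s wbar_cat !dstar_cat.
Qed.

Lemma run_stl x w y : run arc x w y -> (0 < stl x)%N -> stl y = (stl x + size w)%N.
Proof.
elim: w x => [|a w IH] x /=; first by move=> -> _; rewrite addn0.
move=> [z [[_ [_ [_ [_ [_ lev]]]]] zy]] lx.
case: lev => [[lx0 _ _ _]|[lx0 _ _]|[_ _ lz]]; rewrite ?lx0 // in lx.
by rewrite (IH z zy) lz ?addSnnS.
Qed.

Lemma run_mark x w y : run arc x w y -> stl x = 0%N -> stl y = kappa ->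
  exists g a z, [/\ w = g ++ a, size a = kappa, run arc x g z,
    (stq1 z \in F1) || (stq2 z \in F2) & run arc z a y].
Proof.
elim: w x => [|c w IH] x /=.
  by move=> -> l0 lk; move: kappa_gt0; rewrite -[kappa in (0 < kappa)%N]lk l0.
move=> [z [xz zy]] lx ly; have [_ [_ [_ [_ [_ lev]]]]] := xz.
case: lev => [[_ lz _ _]|[_ lz mark]|[lx1 _ _]]; last by rewrite lx in lx1.
  have [g [a [z' [-> sa xz' mark rz']]]] := IH z zy lz ly.
  by exists (c :: g), a, z'; split=> //; exists z.
exists [::], (c :: w), x; split=> //=; last by exists z.
by have := run_stl zy; rewrite lz ly => /(_ isT) ->; rewrite add1n.
Qed.

Hypothesis barK : involutive bar.
Implicit Types (G b : seq S) (i l : nat).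

(* The state of A after the prefix [take i G] of the hairpin [G b wbar G], at level [l]:
   its bridge components are the states of A_1 on the hairpin without its last [i]
   letters and of A_2 on the mirror of the hairpin without its first [i] letters. *)
Definition cstate G b i l : St :=
  ((dstar d1 q01 (take i G), dstar d2 q02 (take i G)),
   dstar d1 q01 (take i G ++ hairpin (drop i G) b),
   dstar d2 q02 (take i G ++ hairpin (drop i G) (wb b)), inord l).

Definition marked G b i :=
  (stq1 (cstate G b i 0) \in F1) || (stq2 (cstate G b i 0) \in F2).

Lemma stl_cstate G b i l : (l <= kappa)%N -> stl (cstate G b i l) = l.
Proof. by move=> lk; rewrite /stl inordK. Qed.

Lemma Bset_cstate G b i l (x := cstate G b i l) :
  Bset bar d1 d2 (stP x).1 (stP x).2 (stq1 x) (stq2 x) (hairpin (drop i G) b).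
Proof. by split; rewrite ?(wbar_hairpin barK); symmetry; apply: dstar_cat. Qed.

Lemma isState_cstate G b i l : isState (cstate G b i l).
Proof. by split; [exists (take i G) | exists (hairpin (drop i G) b); exact: Bset_cstate]. Qed.

Lemma arc_cstate (a0 : S) G b i l l' :
  (i < size G)%N -> (l <= kappa)%N -> (l' <= kappa)%N ->
  [\/ [/\ l = 0, l' = 0 & ~~ marked G b i]%N,
       [/\ l = 0, l' = 1 & marked G b i]%N
     | [/\ 0 < l, l < kappa & l' = l.+1]%N] ->
  arc (cstate G b i l) (nth a0 G i) (cstate G b i.+1 l').
Proof.
move=> iG lk l'k lev; set c := nth a0 G i.
have step b' : take i G ++ hairpin (drop i G) b' =
    (take i.+1 G ++ hairpin (drop i.+1 G) b') ++ [:: bar c].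
  by rewrite (take_nth a0 iG) (drop_nth a0 iG) hairpin_cons -cats1 /hairpin -cat1s !catA.
do 2 (split; first exact: isState_cstate).
split; first by rewrite /stP /= (take_nth a0 iG) -cats1 !dstar_cat.
split; first by rewrite /stq1 /= step dstar_cat.
split; first by rewrite /stq2 /= step dstar_cat.
rewrite !stl_cstate //; case: lev => [[-> -> nm]|[-> -> m]|[l0 lk' ->]].
- by move: nm; rewrite negb_or => /andP[nm1 nm2]; apply: Or31.
- exact: Or32.
- exact: Or33.
Qed.

Lemma run_cstate (a0 : S) G b i0 : (i0 + kappa <= size G)%N -> marked G b i0 ->
  (forall i, i < i0 -> ~~ marked G b i)%N ->
  run arc (cstate G b 0 0) (take (i0 + kappa) G) (cstate G b (i0 + kappa) kappa).
Proof.
move=> nG mi0 min_i0.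
(* Truncated subtraction keeps the level [i - i0] at 0 up to [i0]. *)
have := @run_nth arc (fun i => cstate G b i (i - i0)) a0 (take (i0 + kappa) G).
rewrite size_takel // addKn; apply=> i iG; rewrite nth_take //.
apply: arc_cstate; [lia | lia | lia | case: (ltngtP i i0) => [ii0|i0i|->]].
- by apply: Or31; split; [lia | lia | exact: min_i0].
- by apply: Or33; split; lia.
- by apply: Or32; split; [lia | lia |].
Qed.

Variables (L1 L2 : set (seq S)).
Hypothesis A1_L1 : forall w, L1 w <-> dstar d1 q01 w \in F1.
Hypothesis A2_L2 : forall w, dstar d2 q02 w \in F2 <-> exists2 v, L2 v & w = wb v.

Local Notation inM := (@inM S bar Q1 Q2 d1 d2 q01 q02 F1 F2 kappa).
Local Notation Rmu := (Rmu S bar Q1 Q2 d1 d2 q01 q02 F1 F2 kappa).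
Local Notation Bmu := (Bmu S bar Q1 Q2 d1 d2 kappa).
Local Notation Hk := (Hk S bar kappa L1 L2).

Lemma hairpins_sub_Hk mu : inM mu -> hairpins bar (Rmu mu) (Bmu mu) `<=` Hk.
Proof.
case: mu => I F [[_ [_ [PI lI]]] [_ [_ lF]]] _ [w /= Rw [b /= [Bb1 Bb2] <-]].
have IF := run_sub arcA_arc Rw.
have [g [a [z [ew sa Iz mark zF]]]] := run_mark IF lI lF.
have [e1 e2] := run_stq zF.
have eP := run_stP IF; rewrite PI /= in eP; rewrite eP /= {}ew in Bb1 Bb2 *.
exists g, a, b; split; first by rewrite /hairpin wbar_cat !catA.
split; first by rewrite sa.
case/orP: mark => [m1|m2].
  by left; apply/A1_L1; move: m1; rewrite e1 -Bb1 -!dstar_cat -!catA.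
move: m2; rewrite e2 -Bb2 -!dstar_cat -!catA => /A2_L2[v L2v ev]; right.
suff -> : a ++ b ++ wb a ++ wb g = v by [].
by rewrite -(wbarK barK v) -ev !wbar_cat !(wbarK barK) !catA.
Qed.

Lemma Hk_sub_bigcup_hairpins :
  Hk `<=` \bigcup_(mu in inM) hairpins bar (Rmu mu) (Bmu mu).
Proof.
move=> _ [g [a [b [-> [ka L12]]]]].
have a0 : S.
  by move: ka; case: a L12 => [|c ?] _ //; rewrite leqNgt kappa_gt0.
set G := g ++ a.
have mg : marked G b (size g).
  rewrite /marked /stq1 /stq2 /= /G take_size_cat // drop_size_cat //.
  case: L12 => [/A1_L1 -> // | L2v]; apply/orP; right; apply/A2_L2.
  by exists (a ++ b ++ wb a ++ wb g); rewrite // /hairpin !wbar_cat !(wbarK barK) !catA.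
have exm : exists i, marked G b i by exists (size g).
case: (ex_minnP exm) => i0 mi0 min_i0; set n := (i0 + kappa)%N.
have nG : (n <= size G)%N by have := min_i0 _ mg; rewrite size_cat; lia.
have r : run arc (cstate G b 0 0) (take n G) (cstate G b n kappa).
  apply: run_cstate a0 _ _ _ nG mi0 _ => i ii0; apply/negP => /min_i0; lia.
have init0 : initialS (cstate G b 0 0).
  by split; [exact: isState_cstate | rewrite /stP /= take0 stl_cstate].
have finn : finalS (cstate G b n kappa).
  by split; [exact: isState_cstate | rewrite stl_cstate].
have acc0 : accessible (cstate G b 0 0) by exists (cstate G b 0 0), [::].
have coaccn : coaccessible (cstate G b n kappa) by exists (cstate G b n kappa), [::].
exists (cstate G b 0 0, cstate G b n kappa).
  split; split=> //; split=> //; first exact: coaccessible_run coaccn r.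
  by exists (cstate G b 0 0), (take n G).
exists (take n G); first exact: run_arcA acc0 coaccn r.
exists (hairpin (drop n G) b); first exact: Bset_cstate.
by rewrite -hairpin_cat cat_take_drop /hairpin wbar_cat !catA.
Qed.

Lemma Bmu_neq0 mu : inM mu -> Bmu mu !=set0.
Proof. by case: mu => I F [_ [_ [[_ [w Bw]] _]]]; exists w. Qed.

Lemma inM_Rmu_neq0 mu : inM mu ->
  exists2 mu', inM mu' /\ mu'.2 = mu.2 & Rmu mu' !=set0.
Proof.
case: mu => I F [_ [[AF CF] FF]]; have [i [w [Ii iF]]] := AF.
have Ai : accessible i by exists i, [::].
have Ci : coaccessible i := coaccessible_run CF iF.
by exists (i, F); [split | exists w; exact: run_arcA].
Qed.

End Automaton.

Unset Implicit Arguments. Set Strict Implicit.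

Theorem lemma13 (R : realType) (S : finType) (bar : S -> S)
  (Hbar : involutive bar) (HS : (1 < #|S|)%N)
  (kappa : nat) (Hkappa : (0 < kappa)%N)
  (L1 L2 : set (seq S))
  (Q1 Q2 : finType) (d1 : Q1 -> S -> Q1) (d2 : Q2 -> S -> Q2)
  (q01 : Q1) (q02 : Q2) (F1 : {set Q1}) (F2 : {set Q2})
  (HA1 : forall w, L1 w <-> dstar d1 q01 w \in F1)
  (HA2 : forall w, dstar d2 q02 w \in F2 <->
                   exists2 v, L2 v & w = wbar S bar v)
  (HL1 : forall w, L1 w -> exists u alpha v : seq S,
           size alpha = kappa /\ w = u ++ alpha ++ v ++ wbar S bar alpha)
  (HL2 : forall w, L2 w -> exists alpha v u : seq S,
           size alpha = kappa /\ w = alpha ++ v ++ wbar S bar alpha ++ u) :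
  let sigma := maxM S bar Q1 Q2 d1 d2 q01 q02 F1 F2 kappa R
                 (fun mu => growth S R (Bmu S bar Q1 Q2 d1 d2 kappa mu)) in
  let rho := maxM S bar Q1 Q2 d1 d2 q01 q02 F1 F2 kappa R
               (fun mu => growth S R
                            (Rmu S bar Q1 Q2 d1 d2 q01 q02 F1 F2 kappa mu)) in
  let eta := growth S R (Hk S bar kappa L1 L2) in
  eta = Num.max sigma (Num.sqrt rho).
Proof.
move=> sigma rho eta.
have sound := hairpins_sub_Hk Hkappa Hbar HA1 HA2.
have eta0 : 0 <= eta := growth_ge0 _ _.
apply/eqP; rewrite eq_le ge_max sqrtr_le_sqr //; apply/and3P; split.
- apply: le_trans (growth_subset R (Hk_sub_bigcup_hairpins Hkappa Hbar HA1 HA2)) _.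
  exact: growth_bigcup_hairpins_le.
- apply: bigmax_le => // mu /asboolP /inM_Rmu_neq0[mu' [Mmu' e2] R'].
  rewrite /Bmu -e2; exact: growth_hairpins_ge_right R' (sound _ Mmu').
- apply: bigmax_le => [|mu /asboolP Mmu]; first exact: exprn_ge0.
  exact: growth_hairpins_ge_left (Bmu_neq0 Mmu) (sound _ Mmu).
Qed.
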